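(* Let $(S^\Omega,\mathcal T)$ be a resource theory with a fair currency $\mathcal C$ (value function $\mathrm{Val}$) for a target $\mathcal S$. Then for every $V\in\mathcal S$, $$\mathrm{Cost}(V)=-\mathrm{Balance}(\Omega\to V),\qquad \mathrm{Yield}(V)=\mathrm{Balance}(V\to\Omega).$$
   Context: A resource theory $(S^\Omega,\mathcal T)$ consists of a set $\Omega$, the specification space $S^\Omega$ of all non-empty subsets of $\Omega$ (resources), and a set $\mathcal T$ of maps $f:S^\Omega\to S^\Omega$ acting element-wise, $f(V)=\bigcup_{\nu\in V} f(\{\nu\})$. $V\to W$ iff some $f\in\mathcal T$ has $f(V)\subseteq W$; $\to$ is assumed to be a pre-order. $\mathcal C\subseteq S^\Omega$ is a currency for target $\mathcal S\subseteq S^\Omega$ if (Order) any two elements of $\mathcal C$ are comparable under $\to$ and $\Omega\in\mathcal C$; (Universality) $\Omega\in\mathcal S$ and every $V\in\mathcal S$ has $C,C'\in\mathcal C$ with $C\to V$, $V\to C'$. A value function $\mathrm{Val}:\mathcal C\to\mathbb R_{\ge0}$ satisfies $\mathrm{Val}(C')\ge\mathrm{Val}(C)\iff C'\to C$ and $\mathrm{Val}(\Omega)=0$; $c_{\sup}=\sup_{C\in\mathcal C}\mathrm{Val}(C)$ (possibly $\infty$). $\mathrm{Cost}(V)=\inf\{\mathrm{Val}(C): C\in\mathcal C,\ C\to V\}$, $\mathrm{Yield}(V)=\sup\{\mathrm{Val}(C): C\in\mathcal C,\ V\to C\}$. Independence: $C\cap V\ne\emptyset$ for all $C\in\mathcal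 C,V\in\mathcal S$, and $C\to C'$ implies $C\cap V\to C'\cap V$ for all $V\in\mathcal S$. Balance: $\mathrm{Balance}(V\to W\mid C)=\sup\{\mathrm{Val}(C')-\mathrm{Val}(C): C'\in\mathcal C,\ V\cap C\to W\cap C'\}$ (with $\sup\emptyset=-\infty$) and $\mathrm{Balance}(V\to W)=\sup_{C\in\mathcal C}\mathrm{Balance}(V\to W\mid C)$. Fairness: $\mathcal C$ is independent of $\mathcal S$, and for all $V,W\in\mathcal S$ and $C_1,C_2\in\mathcal C$ with $V\cap C_1\to W\cap C_2$, setting $\Delta=\mathrm{Val}(C_2)-\mathrm{Val}(C_1)$: (F1) for every $C_1'\in\mathcal C$ with $-\Delta\le\mathrm{Val}(C_1')<c_{\sup}-\Delta$ there is $C_2'\in\mathcal C$ with $V\cap C_1'\to W\cap C_2'$ and $\mathrm{Val}(C_2')-\mathrm{Val}(C_1')=\Delta$; (F2) for every $C_2'\in\mathcal C$ with $\Delta\le\mathrm{Val}(C_2')$ there is $C_1'\in\mathcal C$ with $V\cap C_1'\to W\cap C_2'$ and $\mathrm{Val}(C_2')-\mathrm{Val}(C_1')=\Delta$. *)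

From Stdlib Require Import Reals Lra Classical ClassicalEpsilon.
Open Scope R_scope.

Inductive Rbar : Type := Fin (r : R) | PInf | NInf.

Definition Rbar_le (x y : Rbar) : Prop :=
  match x, y with
  | NInf, _ => True
  | _, PInf => True
  | Fin a, Fin b => a <= b
  | _, _ => False
  end.

Definition Rbar_lt (x y : Rbar) : Prop := Rbar_le x y /\ x <> y.

Definition Rbar_opp (x : Rbar) : Rbar :=
  match x with Fin a => Fin (- a) | PInf => NInf | NInf => PInf end.

Definition is_sup (A : Rbar -> Prop) (s : Rbar) : Prop :=
  (forall x, A x -> Rbar_le x s) /\
  (forall u, (forall x, A x -> Rbar_le x u) -> Rbar_le s u).

Definition is_inf (A : Rbar -> Prop) (s : Rbar) : Prop :=
  (forall x, A x -> Rbar_le s x) /\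
  (forall u, (forall x, A x -> Rbar_le u x) -> Rbar_le u s).

Lemma exists_sup (A : Rbar -> Prop) : exists s, is_sup A s.
Proof.
  destruct (classic (A PInf)) as [HP|HP].
  { exists PInf; split; [intros [] _; simpl; auto|].
    intros u Hu; specialize (Hu _ HP); destruct u; simpl in *; tauto. }
  set (E := fun r => A (Fin r)).
  destruct (classic (exists r, E r)) as [Hne|Hne].
  - destruct (classic (bound E)) as [Hb|Hb].
    + destruct (completeness E Hb Hne) as [l [Hl1 Hl2]].
      exists (Fin l); split.
      * intros [a| |] Ha; simpl; auto; try (apply Hl1; exact Ha); contradiction.
      * intros [u| |] Hu; simpl; auto.
        -- apply Hl2; intros a Ha; exact (Hu (Fin a) Ha).
        -- destruct Hne as [r Hr]; exact (Hu (Fin r) Hr).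
    + exists PInf; split; [intros [] _; simpl; auto|].
      intros [u| |] Hu; simpl; auto.
      * apply Hb; exists u; intros a Ha; exact (Hu (Fin a) Ha).
      * destruct Hne as [r Hr]; exact (Hu (Fin r) Hr).
  - exists NInf; split.
    + intros [a| |] Ha; simpl; auto; try (apply Hne; exists a; exact Ha); contradiction.
    + intros; simpl; auto.
Qed.

Lemma exists_inf (A : Rbar -> Prop) : exists s, is_inf A s.
Proof.
  destruct (exists_sup (fun x => A (Rbar_opp x))) as [s [H1 H2]].
  assert (Hoo : forall x, Rbar_opp (Rbar_opp x) = x)
    by (intros [] ; simpl; f_equal; try ring; auto).
  assert (Hle : forall x y, Rbar_le x y -> Rbar_le (Rbar_opp y) (Rbar_opp x))
    by (intros [] []; simpl; auto; lra).
  exists (Rbar_opp s); split.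
  - intros x Hx. rewrite <- (Hoo x). apply Hle, H1. rewrite Hoo; exact Hx.
  - intros u Hu. rewrite <- (Hoo u). apply Hle, H2.
    intros x Hx. rewrite <- (Hoo x). apply Hle, Hu, Hx.
Qed.

(* Supremum / infimum in the extended reals (sup of the empty set = -oo). *)
Definition Esup (A : Rbar -> Prop) : Rbar :=
  proj1_sig (constructive_indefinite_description _ (exists_sup A)).
Definition Einf (A : Rbar -> Prop) : Rbar :=
  proj1_sig (constructive_indefinite_description _ (exists_inf A)).

Section RT.
Context {Omega : Type}.

Definition pset := Omega -> Prop.
Definition full : pset := fun _ => True.
Definition single (nu : Omega) : pset := fun x => x = nu.
Definition inter (V W : pset) : pset := fun x => V x /\ W x.
Definition subset (V W : pset) : Prop := forall x, V x -> W x.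
(* element of the specification space S^Omega: a non-empty subset *)
Definition resource (V : pset) : Prop := exists x, V x.

Definition elementwise (f : pset -> pset) : Prop :=
  (forall nu, resource (f (single nu))) /\
  (forall V x, f V x <-> exists nu, V nu /\ f (single nu) x).

Definition conv (T : (pset -> pset) -> Prop) (V W : pset) : Prop :=
  exists f, T f /\ subset (f V) W.

Definition preorder_on_resources (T : (pset -> pset) -> Prop) : Prop :=
  (forall V, resource V -> conv T V V) /\
  (forall U V W, resource U -> resource V -> resource W ->
     conv T U V -> conv T V W -> conv T U W).

Definition is_currency (T : (pset -> pset) -> Prop) (Cur S : pset -> Prop) : Prop :=
  (forall C, Cur C -> resource C) /\ (forall V, S V -> resource V) /\
  (forall C C', Cur C -> Cur C' -> conv T C C' \/ conv T C' C) /\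
  Cur full /\
  S full /\
  (forall V, S V -> exists C C', Cur C /\ Cur C' /\ conv T C V /\ conv T V C').

Definition is_value_function (T : (pset -> pset) -> Prop) (Cur : pset -> Prop)
  (Val : pset -> R) : Prop :=
  (forall C, Cur C -> 0 <= Val C) /\
  (forall C C', Cur C -> Cur C' -> (Val C' >= Val C <-> conv T C' C)) /\
  Val full = 0.

Definition c_sup (Cur : pset -> Prop) (Val : pset -> R) : Rbar :=
  Esup (fun b => exists C, Cur C /\ b = Fin (Val C)).

Definition Cost T Cur (Val : pset -> R) (V : pset) : Rbar :=
  Einf (fun b => exists C, Cur C /\ conv T C V /\ b = Fin (Val C)).

Definition Yield T Cur (Val : pset -> R) (V : pset) : Rbar :=
  Esup (fun b => exists C, Cur C /\ conv T V C /\ b = Fin (Val C)).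

Definition independent T (Cur S : pset -> Prop) : Prop :=
  (forall C V, Cur C -> S V -> resource (inter C V)) /\
  (forall C C' V, Cur C -> Cur C' -> S V -> conv T C C' ->
     conv T (inter C V) (inter C' V)).

Definition BalanceGiven T Cur (Val : pset -> R) (V W C : pset) : Rbar :=
  Esup (fun b => exists C', Cur C' /\ conv T (inter V C) (inter W C') /\
                   b = Fin (Val C' - Val C)).

Definition Balance T Cur (Val : pset -> R) (V W : pset) : Rbar :=
  Esup (fun b => exists C, Cur C /\ b = BalanceGiven T Cur Val V W C).

Definition fair T (Cur S : pset -> Prop) (Val : pset -> R) : Prop :=
  independent T Cur S /\
  forall V W C1 C2, S V -> S W -> Cur C1 -> Cur C2 ->
    conv T (inter V C1) (inter W C2) ->
    let Delta := Val C2 - Val C1 in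
    (* (F1) *)
    (forall C1', Cur C1' -> - Delta <= Val C1' ->
        Rbar_lt (Fin (Val C1')) (match c_sup Cur Val with
                                 | Fin c => Fin (c - Delta) | x => x end) ->
        exists C2', Cur C2' /\ conv T (inter V C1') (inter W C2') /\
                    Val C2' - Val C1' = Delta) /\
    (* (F2) *)
    (forall C2', Cur C2' -> Delta <= Val C2' ->
        exists C1', Cur C1' /\ conv T (inter V C1') (inter W C2') /\
                    Val C2' - Val C1' = Delta).

End RT.

(* Exchanges directly witnessing [C → V] or [V → C] give
   [-Cost V <= Balance (Ω → V)] and [Yield V <= Balance (V → Ω)].  Conversely,
   fairness lets any exchange be re-based at the free currency Ω: (F2) turns
   [Ω ∩ C → V ∩ C'] into some [C1 → V] with [Val C1 = Val C - Val C'], and (F1)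
   turns [V ∩ C → Ω ∩ C'] with nonnegative net value into some [V → C2] with
   [Val C2 = Val C' - Val C].  (F1) needs [Val C > 0]; when [Val C = 0] we have
   [Ω → C], so independence gives [V → V ∩ C] and hence [V → C'] directly. *)
From Stdlib Require Import Reals Lra ClassicalEpsilon.
Open Scope R_scope.

Lemma Rbar_le_antisym x y : Rbar_le x y -> Rbar_le y x -> x = y.
Proof. destruct x, y; simpl; intros; try tauto. f_equal; lra. Qed.

Lemma Rbar_le_trans x y z : Rbar_le x y -> Rbar_le y z -> Rbar_le x z.
Proof. destruct x, y, z; simpl; intros; try tauto; lra. Qed.

Lemma Rbar_opp_le x y : Rbar_le x y -> Rbar_le (Rbar_opp y) (Rbar_opp x).
Proof. destruct x, y; simpl; intros; try tauto; lra. Qed.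

Lemma Rbar_opp_involutive x : Rbar_opp (Rbar_opp x) = x.
Proof. destruct x; simpl; auto. f_equal; ring. Qed.

(* The match is the term [c_sup - Delta] of condition (F1). *)
Lemma Rbar_lt_shift (x : Rbar) (a d r : R) : Rbar_le (Fin a) x -> r + d < a ->
  Rbar_lt (Fin r) (match x with Fin c => Fin (c - d) | PInf => PInf | NInf => NInf end).
Proof.
  destruct x as [c| |]; simpl; intros Ha Hr.
  - split; [simpl; lra | intros E; injection E; lra].
  - split; [exact I | discriminate].
  - contradiction.
Qed.

Lemma Esup_ub A x : A x -> Rbar_le x (Esup A).
Proof.
  unfold Esup; destruct (constructive_indefinite_description _ _) as [s Hs].
  exact (proj1 Hs x).
Qed.

Lemma Esup_least A u : (forall x, A x -> Rbar_le x u) -> Rbar_le (Esup A) u.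
Proof.
  unfold Esup; destruct (constructive_indefinite_description _ _) as [s Hs].
  exact (proj2 Hs u).
Qed.

Lemma Einf_lb A x : A x -> Rbar_le (Einf A) x.
Proof.
  unfold Einf; destruct (constructive_indefinite_description _ _) as [s Hs].
  exact (proj1 Hs x).
Qed.

Lemma Einf_greatest A u : (forall x, A x -> Rbar_le u x) -> Rbar_le u (Einf A).
Proof.
  unfold Einf; destruct (constructive_indefinite_description _ _) as [s Hs].
  exact (proj2 Hs u).
Qed.

Section FairCurrency.

Variable Omega : Type.
Variable T : (@pset Omega -> @pset Omega) -> Prop.
Variables Cur S : @pset Omega -> Prop.
Variable Val : @pset Omega -> R.

Hypothesis HT : forall f, T f -> elementwise f.
Hypothesis Hpre : preorder_on_resources T.
Hypothesis Hcur : is_currency T Cur S.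
Hypothesis Hval : is_value_function T Cur Val.
Hypothesis Hfair : fair T Cur S Val.

Lemma conv_weaken X X' Y Y' :
  conv T X Y -> subset X' X -> subset Y Y' -> conv T X' Y'.
Proof.
  intros [f [Hf HXY]] HX' HY. exists f; split; [exact Hf|].
  intros y Hy. apply HY, HXY.
  destruct (HT f Hf) as [_ Helem].
  apply Helem in Hy as [nu [Hnu Hy]].
  apply Helem; eauto.
Qed.

Ltac conv_from H :=
  apply (conv_weaken _ _ _ _ H); unfold subset, inter, full; firstorder.

Lemma le_Balance V W C C' : Cur C -> Cur C' -> conv T (inter V C) (inter W C') ->
  Rbar_le (Fin (Val C' - Val C)) (Balance T Cur Val V W).
Proof.
  intros HC HC' Hx.
  apply (Rbar_le_trans _ (BalanceGiven T Cur Val V W C)).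
  - apply Esup_ub; eauto.
  - apply Esup_ub; eauto.
Qed.

Lemma Balance_le V W u :
  (forall C C', Cur C -> Cur C' -> conv T (inter V C) (inter W C') ->
     Rbar_le (Fin (Val C' - Val C)) u) ->
  Rbar_le (Balance T Cur Val V W) u.
Proof.
  intros Hu. apply Esup_least; intros b [C [HC ->]].
  apply Esup_least; intros b [C' [HC' [Hx ->]]]; auto.
Qed.

Lemma Cost_le V C : Cur C -> conv T C V -> Rbar_le (Cost T Cur Val V) (Fin (Val C)).
Proof. intros; apply Einf_lb; eauto. Qed.

Lemma le_Cost V u :
  (forall C, Cur C -> conv T C V -> Rbar_le u (Fin (Val C))) ->
  Rbar_le u (Cost T Cur Val V).
Proof. intros Hu; apply Einf_greatest; intros b [C [HC [HCV ->]]]; auto. Qed.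

Lemma le_Yield V C : Cur C -> conv T V C -> Rbar_le (Fin (Val C)) (Yield T Cur Val V).
Proof. intros; apply Esup_ub; eauto. Qed.

Lemma Yield_le V u :
  (forall C, Cur C -> conv T V C -> Rbar_le (Fin (Val C)) u) ->
  Rbar_le (Yield T Cur Val V) u.
Proof. intros Hu; apply Esup_least; intros b [C [HC [HVC ->]]]; auto. Qed.

Lemma Val_le_c_sup C : Cur C -> Rbar_le (Fin (Val C)) (c_sup Cur Val).
Proof. intros; apply Esup_ub; eauto. Qed.

Lemma Val_full : Val full = 0.
Proof. apply Hval. Qed.

Lemma Val_ge0 C : Cur C -> 0 <= Val C.
Proof. apply Hval. Qed.

Lemma conv_currency_iff C C' : Cur C -> Cur C' -> (conv T C' C <-> Val C <= Val C').
Proof.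
  intros HC HC'. rewrite <- (proj1 (proj2 Hval) C C' HC HC'). split; lra.
Qed.

Lemma Yield_ge0 V : S V -> Rbar_le (Fin 0) (Yield T Cur Val V).
Proof.
  intros HV. destruct Hcur as (_ & _ & _ & _ & _ & Huniv).
  destruct (Huniv V HV) as (_ & C' & _ & HC' & _ & HVC').
  apply (Rbar_le_trans _ (Fin (Val C'))); [apply Val_ge0; exact HC'|].
  apply le_Yield; assumption.
Qed.

Lemma cost_witness_of_exchange V C C' : S V -> Cur C -> Cur C' ->
  conv T (inter full C) (inter V C') ->
  exists C1, Cur C1 /\ conv T C1 V /\ Val C1 = Val C - Val C'.
Proof.
  intros HV HC HC' Hx.
  destruct Hcur as (_ & _ & _ & Hfull & HSfull & _).
  assert (HCC' : conv T C C') by conv_from Hx.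
  apply (conv_currency_iff C' C HC' HC) in HCC'.
  destruct Hfair as [_ HF].
  destruct (HF full V C C' HSfull HV HC HC' Hx) as [_ HF2]; cbv zeta in HF2.
  destruct (HF2 full Hfull) as [C1 [HC1 [Hx1 HVal1]]]; rewrite Val_full in *; [lra|].
  exists C1; split; [exact HC1|]; split; [conv_from Hx1 | lra].
Qed.

Lemma yield_witness_of_exchange V C C' : S V -> Cur C -> Cur C' ->
  conv T (inter V C) (inter full C') -> Val C <= Val C' ->
  exists C2, Cur C2 /\ conv T V C2 /\ Val C2 = Val C' - Val C.
Proof.
  intros HV HC HC' Hx Hgain.
  destruct Hcur as (HCres & HSres & _ & Hfull & HSfull & _).
  destruct (Rle_lt_or_eq_dec 0 (Val C) (Val_ge0 C HC)) as [Hpos | Hzero].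
  - destruct Hfair as [_ HF].
    destruct (HF V full C C' HV HSfull HC HC' Hx) as [HF1 _]; cbv zeta in HF1.
    destruct (HF1 full Hfull) as [C2 [HC2 [Hx2 HVal2]]]; rewrite Val_full in *.
    + lra.
    + apply (Rbar_lt_shift _ (Val C')); [apply Val_le_c_sup; exact HC' | lra].
    + exists C2; split; [exact HC2|]; split; [conv_from Hx2 | lra].
  - destruct Hfair as [[Hind_res Hind_conv] _].
    assert (HfullC : conv T full C)
      by (apply (conv_currency_iff C full HC Hfull); rewrite Val_full; lra).
    assert (HV_CV : conv T V (inter C V))
      by (specialize (Hind_conv full C V Hfull HC HV HfullC); conv_from Hind_conv).
    assert (HCV_C' : conv T (inter C V) C') by conv_from Hx.
    exists C'; split; [exact HC'|]; split; [|lra].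
    exact (proj2 Hpre V (inter C V) C' (HSres V HV) (Hind_res C V HC HV) (HCres C' HC')
             HV_CV HCV_C').
Qed.

Lemma Cost_opp_Balance_from_full V : S V ->
  Cost T Cur Val V = Rbar_opp (Balance T Cur Val full V).
Proof.
  intros HV. destruct Hcur as (_ & _ & _ & Hfull & _ & _).
  apply Rbar_le_antisym.
  - rewrite <- (Rbar_opp_involutive (Cost T Cur Val V)).
    apply Rbar_opp_le, Balance_le; intros C C' HC HC' Hx.
    destruct (cost_witness_of_exchange V C C' HV HC HC' Hx) as [C1 [HC1 [HC1V HVal1]]].
    replace (Fin (Val C' - Val C)) with (Rbar_opp (Fin (Val C1))) by (simpl; f_equal; lra).
    apply Rbar_opp_le, Cost_le; assumption.
  - apply le_Cost; intros D HD HDV.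
    rewrite <- (Rbar_opp_involutive (Fin (Val D))).
    apply Rbar_opp_le.
    replace (Rbar_opp (Fin (Val D))) with (Fin (Val full - Val D))
      by (simpl; rewrite Val_full; f_equal; ring).
    apply le_Balance; [exact HD | exact Hfull | conv_from HDV].
Qed.

Lemma Yield_Balance_to_full V : S V ->
  Yield T Cur Val V = Balance T Cur Val V full.
Proof.
  intros HV. destruct Hcur as (_ & _ & _ & Hfull & _ & _).
  apply Rbar_le_antisym.
  - apply Yield_le; intros C HC HVC.
    replace (Val C) with (Val C - Val full) by (rewrite Val_full; ring).
    apply le_Balance; [exact Hfull | exact HC | conv_from HVC].
  - apply Balance_le; intros C C' HC HC' Hx.
    destruct (Rlt_or_le (Val C') (Val C)) as [Hloss | Hgain].
    + apply (Rbar_le_trans _ (Fin 0)); [simpl; lra | apply Yield_ge0; exact HV].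
    + destruct (yield_witness_of_exchange V C C' HV HC HC' Hx Hgain)
        as [C2 [HC2 [HVC2 HVal2]]].
      rewrite <- HVal2; apply le_Yield; assumption.
Qed.

End FairCurrency.

Theorem mainTheorem9 (Omega : Type)
  (T : (@pset Omega -> @pset Omega) -> Prop)
  (Cur S : @pset Omega -> Prop) (Val : @pset Omega -> R)
  (HT : forall f, T f -> elementwise f)
  (Hpre : preorder_on_resources T)
  (Hcur : is_currency T Cur S)
  (Hval : is_value_function T Cur Val)
  (Hfair : fair T Cur S Val) :
  forall V, S V ->
    Cost T Cur Val V = Rbar_opp (Balance T Cur Val full V) /\
    Yield T Cur Val V = Balance T Cur Val V full.
Proof.
  intros V HV; split.
  - eapply Cost_opp_Balance_from_full; eassumption.
  - eapply Yield_Balance_to_full; eassumption.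
Qed.
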